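(* There is a family of FMSM instances, with ground sets of size $n$ for arbitrarily large $n$, in which $f$ is monotone submodular and $\mathcal{I}$ is a partition matroid, such that $\max_{S \in \mathcal{F}} f(S) = 1$ but there is a point $x \in P_{\mathcal{F}}$ whose multilinear extension value satisfies $F(x) = \Omega(\sqrt{n})$.
   Context: An FMSM instance consists of a ground set $V$ of $n$ elements, a non-negative submodular function $f : 2^V \to \mathbb{R}_{\ge 0}$, a matroid $\mathcal{I} \subseteq 2^V$, a partition of $V$ into color groups $V_1,\dots,V_C$, and integer bounds $0 \le \ell_c \le u_c$. Fair sets: $\mathcal{C} = \{S : \ell_c \le |S \cap V_c| \le u_c\ \forall c\}$; feasible sets $\mathcal{F} = \mathcal{I} \cap \mathcal{C}$. $P_{\mathcal{F}}$ is the convex hull of the indicator vectors $\mathbb{1}_S$, $S \in \mathcal{F}$. The multilinear extension of $f$ is $F(x) = \sum_{S \subseteq V} f(S) \prod_{i \in S} x_i \prod_{j \notin S}(1-x_j)$ for $x \in [0,1]^n$. $f$ is monotone if $f(Y) \le f(X)$ whenever $Y \subseteq X$. A partition matroid is given by a partition of $V$ into blocks $G_i$ with bounds $k_i$, a set $X$ being independent iff $|X \cap G_i| \le k_i$ for all $i$. *)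

From mathcomp Require Import all_boot all_order all_algebra.
Set Implicit Arguments. Unset Strict Implicit. Unset Printing Implicit Defensive.
Import Order.TTheory GRing.Theory Num.Theory.
Local Open Scope ring_scope.

Section FMSM.
Variable R : rcfType.
Variable n : nat.

Definition nonneg_fun (f : {set 'I_n} -> R) : Prop := forall S, 0 <= f S.

Definition submodular (f : {set 'I_n} -> R) : Prop :=
  forall A B : {set 'I_n}, f (A :|: B) + f (A :&: B) <= f A + f B.

Definition monotone (f : {set 'I_n} -> R) : Prop :=
  forall Y X : {set 'I_n}, Y \subset X -> f Y <= f X.

Definition partition_indep (m : nat) (g : 'I_n -> 'I_m) (k : 'I_m -> nat)
    (X : {set 'I_n}) : bool :=
  [forall i : 'I_m, #|X :&: [set e | g e == i]| <= k i]%N.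

Definition fair (C : nat) (col : 'I_n -> 'I_C) (l u : 'I_C -> nat)
    (X : {set 'I_n}) : bool :=
  [forall c : 'I_C, l c <= #|X :&: [set e | col e == c]| <= u c]%N.

Definition multilinear (f : {set 'I_n} -> R) (x : 'I_n -> R) : R :=
  \sum_(S : {set 'I_n}) f S * (\prod_(i in S) x i) * (\prod_(j in ~: S) (1 - x j)).

Definition in_hull (feas : pred {set 'I_n}) (x : 'I_n -> R) : Prop :=
  exists lam : {set 'I_n} -> R,
    [/\ forall S, 0 <= lam S,
        forall S, ~~ feas S -> lam S = 0,
        \sum_(S : {set 'I_n}) lam S = 1 &
        forall i, x i = \sum_(S : {set 'I_n}) lam S * (i \in S)%:R].

Definition max_over_is (feas : pred {set 'I_n}) (f : {set 'I_n} -> R) (v : R) : Prop :=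
  (exists2 S, feas S & f S = v) /\ (forall S, feas S -> f S <= v).
End FMSM.

(* Take k columns, each a chain of k + 1 nodes starting at a hub, and let f
   count the columns whose chain is met outside its hub; as a coverage
   function f is monotone submodular.  A partition matroid with unit
   capacities and colour constraints with unit upper bounds force every
   feasible set that meets a chain to contain its hub, and no two hubs fit
   together, so f <= 1 on feasible sets.  But the k feasible sets "chain j together with the
   side nodes of all other columns" average to a point x giving value 1/k to
   each of the k^2 non-hub chain nodes, hence
   F(x) = k (1 - (1 - 1/k)^k) >= k/2 by Bernoulli's inequality, while the
   ground set has n = k (2k + 1) <= 4 k^2 elements. *)

From HB Require Import structures.
From mathcomp Require Import all_boot all_order all_algebra.
From mathcomp Require Import lra zify.
Set Implicit Arguments. Unset Strict Implicit. Unset Printing Implicit Defensive.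
Import Order.TTheory GRing.Theory Num.Theory.
Local Open Scope ring_scope.

Section Bernoulli.
Variable R : realFieldType.

Lemma bernoulli_mul_le1 (a : R) (m : nat) :
  0 <= a <= 1 -> (1 - a) ^+ m * (1 + m%:R * a) <= 1.
Proof.
case/andP=> a_ge0 a_le1; elim: m => [|m IHm]; first by rewrite expr0 mul0r addr0 mul1r.
rewrite exprSr -mulrA; apply: le_trans IHm; rewrite ler_wpM2l ?exprn_ge0 ?subr_ge0 //.
have m_ge0 : 0 <= (m%:R : R) := ler0n _ _.
rewrite -natr1; nra.
Qed.

Lemma one_subV_expr_le_half (k : nat) : (0 < k)%N -> (1 - k%:R^-1) ^+ k <= 2^-1 :> R.
Proof.
move=> k_gt0; have k_gt0R : 0 < (k%:R : R) by rewrite ltr0n.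
have := @bernoulli_mul_le1 k%:R^-1 k.
rewrite mulfV ?gt_eqF // invr_ge0 invf_le1 ?ler0n ?ler1n //= => /(_ k_gt0).
lra.
Qed.
End Bernoulli.

Lemma sum_subsets_prod (R : comRingType) (I : finType) (a b : I -> R) :
  \sum_(S : {set I}) (\prod_(i in S) a i) * (\prod_(i in ~: S) b i)
  = \prod_(i : I) (a i + b i).
Proof.
have -> : \prod_(i : I) (a i + b i) =
    \prod_(i : I) \sum_(c : bool) (if c then a i else b i).
  by apply: eq_bigr => i _; rewrite big_bool.
rewrite bigA_distr_bigA /= (reindex (fun F : {ffun I -> bool} => [set i | F i])).
  apply: eq_bigr => F _; rewrite [RHS](bigID F) /=.
  congr (_ * _); apply: eq_big => i; rewrite !inE //.
    by move=> ->.
  by move=> /negbTE ->.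
exists (fun S : {set I} => [ffun i => i \in S]) => [F _|S _].
  by apply/ffunP => i; rewrite ffunE inE.
by apply/setP => i; rewrite inE ffunE.
Qed.

Section Coverage.
Variables (R : rcfType) (n : nat).
Implicit Types (S : {set 'I_n}) (x : 'I_n -> R).

Definition coverage (I : finType) (D : I -> {set 'I_n}) S : R :=
  \sum_(j : I) (S :&: D j != set0)%:R.

Variables (I : finType) (D : I -> {set 'I_n}).

Lemma coverage_ge0 : nonneg_fun (coverage D).
Proof. by move=> S; apply: sumr_ge0 => j _; apply: ler0n. Qed.

Lemma coverage_monotone : monotone (coverage D).
Proof.
move=> Y X sYX; apply: ler_sum => j _.
have [-> | [e eYD]] := set_0Vmem (Y :&: D j); first by rewrite eqxx ler0n.
have hitX : X :&: D j != set0.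
  by apply/set0Pn; exists e; apply: subsetP eYD; apply: setSI.
by rewrite hitX ler_nat leq_b1.
Qed.

Lemma coverage_submodular : submodular (coverage D).
Proof.
move=> A B; rewrite -!big_split /=; apply: ler_sum => j _.
have meet_hits : A :&: B :&: D j != set0 ->
    (A :&: D j != set0) && (B :&: D j != set0).
  case/set0Pn=> e; rewrite !inE => /andP[/andP[eA eB] eD].
  by apply/andP; split; apply/set0Pn; exists e; rewrite inE ?eA ?eB.
rewrite setIUl setU_eq0 negb_and -!natrD ler_nat; move: meet_hits.
move: (A :&: B :&: D j != set0) (A :&: D j != set0) (B :&: D j != set0).
by case=> [] [] [] // /(_ isT).
Qed.

Lemma coverage_ge1 S j : S :&: D j != set0 -> 1 <= coverage D S.
Proof.
move=> hit; rewrite /coverage (bigD1 j) //= hit lerDl.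
by apply: sumr_ge0 => i _; apply: ler0n.
Qed.

Lemma coverage_le1 S :
  (forall i j, S :&: D i != set0 -> S :&: D j != set0 -> i = j) ->
  coverage D S <= 1.
Proof.
move=> hit_uniq; have -> : coverage D S = #|[pred j | S :&: D j != set0]|%:R.
  rewrite /coverage -sum1_card natr_sum [RHS]big_mkcond.
  by apply: eq_bigr => j _; rewrite inE; case: (_ != _).
by rewrite lern1; apply/card_le1_eqP => i j hi hj; apply: hit_uniq hj hi.
Qed.

Lemma multilinear_sum (F : I -> {set 'I_n} -> R) x :
  multilinear (fun S => \sum_(j : I) F j S) x = \sum_(j : I) multilinear (F j) x.
Proof.
rewrite /multilinear exchange_big; apply: eq_bigr => S _.
by rewrite !mulr_suml.
Qed.

Lemma multilinear_hit (A : {set 'I_n}) x :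
  multilinear (fun S => (S :&: A != set0)%:R) x = 1 - \prod_(i in A) (1 - x i).
Proof.
pose weight (S : {set 'I_n}) := (\prod_(i in S) x i) * (\prod_(i in ~: S) (1 - x i)).
have weight_sum : \sum_(S : {set 'I_n}) weight S = 1.
  by rewrite sum_subsets_prod; apply: big1 => i _; rewrite subrKC.
have miss_sum : \sum_(S : {set 'I_n}) (S :&: A == set0)%:R * weight S
                 = \prod_(i in A) (1 - x i).
  transitivity (\sum_(S : {set 'I_n})
      (\prod_(i in S) (x i * (i \notin A)%:R)) * (\prod_(i in ~: S) (1 - x i))).
    apply: eq_bigr => S _; rewrite /weight mulrA big_split /= [X in _ = X * _]mulrC.
    congr (_ * _ * _); case: eqP => [/setP missA | /eqP /set0Pn[i]].
      by rewrite big1 // => i iS; have := missA i; rewrite !inE iS => /= ->.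
    by rewrite inE => /andP[iS iA]; rewrite (bigD1 i) //= iA mul0r.
  rewrite sum_subsets_prod (bigID (mem A)) /= [X in _ * X]big1 ?mulr1.
    by apply: eq_bigr => i ->; rewrite mulr0 add0r.
  by move=> i /negbTE ->; rewrite mulr1 subrKC.
rewrite -miss_sum -[X in X - _]weight_sum -sumrB; apply: eq_bigr => S _.
rewrite -mulrA -/(weight S) -[X in X - _]mul1r -mulrBl.
by case: eqP => _; rewrite ?subrr ?subr0.
Qed.

Lemma multilinear_coverage x :
  multilinear (coverage D) x = \sum_(j : I) (1 - \prod_(i in D j) (1 - x i)).
Proof. by rewrite multilinear_sum; apply: eq_bigr => j _; apply: multilinear_hit. Qed.

End Coverage.

Lemma in_hull_average (R : rcfType) (n : nat) (I : finType)
    (feas : pred {set 'I_n}) (A : I -> {set 'I_n}) :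
  (0 < #|I|)%N -> (forall i, feas (A i)) ->
  in_hull feas (fun e => #|I|%:R^-1 * \sum_(i : I) (e \in A i)%:R : R).
Proof.
move=> I_gt0 feasA; pose c : R := #|I|%:R^-1.
have pick_set (B : {set 'I_n}) (F : {set 'I_n} -> R) :
    \sum_(S : {set 'I_n}) (S == B)%:R * F S = F B.
  rewrite (bigD1 B) //= eqxx mul1r big1 ?addr0 // => S /negbTE->.
  by rewrite mul0r.
exists (fun S => c * \sum_(i : I) (S == A i)%:R); split.
- by move=> S; rewrite mulr_ge0 ?invr_ge0 ?sumr_ge0 // => *; apply: ler0n.
- move=> S notS; rewrite big1 ?mulr0 // => i _.
  by case: eqP notS => // ->; rewrite feasA.
- rewrite -mulr_sumr exchange_big /=.
  rewrite (eq_bigr (fun=> 1)) => [|i _].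
    by rewrite sumr_const mulVf // pnatr_eq0 -lt0n.
  by rewrite -[RHS](pick_set (A i) (fun=> 1)); apply: eq_bigr => S _; rewrite mulr1.
- move=> e; under [RHS]eq_bigr do rewrite -mulrA mulr_suml.
  rewrite -mulr_sumr exchange_big /=; congr (_ * _); apply: eq_bigr => i _.
  by rewrite -(pick_set (A i) (fun S => (e \in S)%:R)).
Qed.

Lemma partition_indep1P (n m : nat) (g : 'I_n -> 'I_m) (S : {set 'I_n}) :
  reflect {in S &, injective g} (partition_indep g (fun=> 1%N) S).
Proof.
apply: (iffP forallP) => [le1 e e' eS e'S ge | injg i].
  by have /card_le1_eqP/(_ e' e) := le1 (g e'); apply; rewrite !inE ?eS ?e'S ?ge eqxx.
apply/card_le1_eqP => e e'; rewrite !inE => /andP[eS /eqP ge] /andP[e'S /eqP ge'].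
by apply: injg => //; rewrite ge ge'.
Qed.

Lemma fair01P (n C : nat) (col : 'I_n -> 'I_C) (need : pred 'I_C) (S : {set 'I_n}) :
  reflect ({in S &, injective col} /\
           forall c, need c -> exists2 e, e \in S & col e = c)
          (fair col (fun c => nat_of_bool (need c)) (fun=> 1%N) S).
Proof.
apply: (iffP forallP) => [bounds | [injcol cover] c].
  split=> [e e' eS e'S ce | c needc].
    have /andP[_ /card_le1_eqP/(_ e' e)] := bounds (col e').
    by apply; rewrite !inE ?eS ?e'S ?ce eqxx.
  have /andP[] := bounds c; rewrite needc => /card_gt0P[e].
  by rewrite !inE => /andP[eS /eqP ce] _; exists e.
apply/andP; split.
  case: (boolP (need c)) => //= /cover[e eS ce].
  by apply/card_gt0P; exists e; rewrite !inE eS ce /=.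
apply/card_le1_eqP => e e'; rewrite !inE => /andP[eS /eqP ce] /andP[e'S /eqP ce'].
by apply: injcol => //; rewrite ce ce'.
Qed.

Section RankMap.
Variables (T B : finType) (h : T -> B).

Definition rank_map (e : 'I_#|T|) : 'I_#|B| := enum_rank (h (enum_val e)).

Lemma rank_map_surj :
  (forall b, exists v, h v = b) -> forall c, exists e, rank_map e = c.
Proof.
move=> h_surj c; have [v hv] := h_surj (enum_val c).
by exists (enum_rank v); rewrite /rank_map enum_rankK hv enum_valK.
Qed.

Lemma rank_map_injP (S : {set 'I_#|T|}) :
  {in S &, injective rank_map} <-> {in enum_rank @^-1: S &, injective h}.
Proof.
split=> injh.
  move=> v w; rewrite !inE => vS wS hvw; apply: enum_rank_inj; apply: injh => //.
  by rewrite /rank_map !enum_rankK hvw.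
move=> e e' eS e'S /enum_rank_inj hee'; apply: enum_val_inj.
by apply: injh; rewrite ?inE ?enum_valK.
Qed.

Lemma rank_map_coverP (P : pred B) (S : {set 'I_#|T|}) :
  (forall c : 'I_#|B|, P (enum_val c) -> exists2 e, e \in S & rank_map e = c) <->
  (forall b, P b -> exists2 v, v \in enum_rank @^-1: S & h v = b).
Proof.
split=> cover.
  move=> b Pb; have [|e eS /enum_rank_inj he] := cover (enum_rank b).
    by rewrite enum_rankK.
  by exists (enum_val e); rewrite ?inE ?enum_valK.
move=> c Pc; have [v] := cover _ Pc; rewrite inE => vS hv.
by exists (enum_rank v); rewrite // /rank_map enum_rankK hv enum_valK.
Qed.

End RankMap.

Lemma enum_rank_imsetK (T : finType) (A : {set T}) : enum_rank @^-1: (enum_rank @: A) = A.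
Proof. by apply/setP => v; rewrite inE mem_imset //; apply: enum_rank_inj. Qed.

Lemma setI_imset_eq0 (aT rT : finType) (f : aT -> rT) (S : {set rT}) (A : {set aT}) :
  (S :&: f @: A != set0) = (f @^-1: S :&: A != set0).
Proof.
apply/set0Pn/set0Pn => [[e /setIP[eS /imsetP[v vA ev]]] | [v /setIP[vS vA]]].
  by exists v; rewrite !inE -ev eS.
by rewrite inE in vS; exists (f v); rewrite inE vS imset_f.
Qed.

Section ChainGadget.
Variable k : nat.

(* Column j has the chain nodes Chain j 0 (its hub), ..., Chain j k and the
   side nodes Alt j p, p < k.  All hubs share the block None, and Alt j p shares
   the block (j, p) with Chain j p.+1 and the colour (j, p) with Chain j p.  Every
   colour (j, t) with t < k must be used exactly once, so a feasible set
   containing Chain j p.+1 lacks Alt j p and therefore contains Chain j p. *)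
Inductive node := Chain of 'I_k & 'I_k.+1 | Alt of 'I_k & 'I_k.

Definition node_code (v : node) : 'I_k * 'I_k.+1 + 'I_k * 'I_k :=
  match v with Chain j t => inl (j, t) | Alt j p => inr (j, p) end.

Definition node_decode (c : 'I_k * 'I_k.+1 + 'I_k * 'I_k) : node :=
  match c with inl (j, t) => Chain j t | inr (j, p) => Alt j p end.

Lemma node_codeK : cancel node_code node_decode.
Proof. by case. Qed.

HB.instance Definition _ := Finite.copy node (can_type node_codeK).

Lemma card_node : #|{: node}| = (k * k.+1 + k * k)%N.
Proof.
rewrite (bij_eq_card (f := node_code)) ?card_sum ?card_prod ?card_ord //.
by exists node_decode; [apply: node_codeK | case=> [[]|[]]].
Qed.

Definition block (v : node) : option ('I_k * 'I_k) :=
  match v with Chain j t => omap (pair j) (unlift ord0 t) | Alt j p => Some (j, p) end.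

Definition colour (v : node) : 'I_k * 'I_k.+1 :=
  match v with Chain j t => (j, t) | Alt j p => (j, widen_ord (leqnSn k) p) end.

Definition needed (c : 'I_k * 'I_k.+1) : bool := c.2 != ord_max.

Definition feasible_nodes (A : {set node}) : Prop :=
  [/\ {in A &, injective block}, {in A &, injective colour} &
      forall c, needed c -> exists2 v, v \in A & colour v = c].

Lemma feasible_chain_pred A j p :
  feasible_nodes A -> Chain j (lift ord0 p) \in A ->
  Chain j (widen_ord (leqnSn k) p) \in A.
Proof.
case=> blockI _ cover chainA.
have altA : Alt j p \notin A.
  by apply/negP => /(blockI _ _ chainA); rewrite /= liftK => /(_ erefl).
have [|[j' t|j' q] vA] := cover (j, widen_ord (leqnSn k) p).
- by rewrite /needed -val_eqE /= ltn_eqF.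
- by case=> <- <-.
- by case=> ej /val_inj qp; move: altA; rewrite -ej -qp vA.
Qed.

Lemma feasible_chain_hub A j t :
  feasible_nodes A -> Chain j t \in A -> Chain j ord0 \in A.
Proof.
move=> feasA; have [m] := ubnP t; elim: m t => // m IHm t; rewrite ltnS => le_tm.
case: (unliftP ord0 t) le_tm => [p -> | -> //] le_tm /(feasible_chain_pred feasA).
by apply: IHm; apply: leq_trans le_tm; rewrite lift0.
Qed.

Definition down (j : 'I_k) : {set node} := [set Chain j (lift ord0 p) | p : 'I_k].

Lemma card_down j : #|down j| = k.
Proof. by rewrite card_imset ?card_ord // => p q [/addnI/val_inj]. Qed.

Lemma feasible_down_uniq A i j :
  feasible_nodes A -> A :&: down i != set0 -> A :&: down j != set0 -> i = j.
Proof.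
move=> feasA; have hub l : A :&: down l != set0 -> Chain l ord0 \in A.
  case/set0Pn=> v /setIP[vA /imsetP[p _ vp]].
  by rewrite vp in vA; apply: feasible_chain_hub feasA vA.
move=> /hub hubi /hub hubj; case: feasA => blockI _ _.
by have := blockI _ _ hubi hubj; rewrite /= unlift_none => /(_ erefl) [].
Qed.

Definition full_chain (j : 'I_k) : {set node} :=
  [set v | match v with Chain j' _ => j' == j | Alt j' _ => j' != j end].

Lemma feasible_full_chain j : feasible_nodes (full_chain j).
Proof.
split.
- move=> [j1 t1|j1 p1] [j2 t2|j2 p2]; rewrite !inE //=.
  + move=> /eqP-> /eqP->; case: unliftP => [p1 ->|->]; case: unliftP => [p2 ->|->] //=.
    by case=> ->.
  + move=> /eqP-> /negPf ne; case: unliftP => [p1 _|_] //= [ej].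
    by rewrite ej eqxx in ne.
  + move=> /negPf ne /eqP->; case: unliftP => [p2 _|_] //= [ej].
    by rewrite ej eqxx in ne.
  + by move=> _ _ [-> ->].
- move=> [j1 t1|j1 p1] [j2 t2|j2 p2]; rewrite !inE //=.
  + by move=> _ _ [-> ->].
  + by move=> /eqP-> /negPf ne [ej]; rewrite ej eqxx in ne.
  + by move=> /negPf ne /eqP-> [ej]; rewrite ej eqxx in ne.
  + by move=> _ _ [-> /val_inj ->].
- move=> [j' t]; rewrite /needed -val_eqE /= => t_neqk.
  have [->|ne] := eqVneq j' j; first by exists (Chain j t); rewrite ?inE.
  have t_ltk : (t < k)%N by rewrite ltn_neqAle t_neqk -ltnS ltn_ord.
  by exists (Alt j' (Ordinal t_ltk)); rewrite ?inE //=; congr pair; apply: val_inj.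
Qed.

Lemma block_surj : (0 < k)%N -> forall b, exists v : node, block v = b.
Proof.
move=> k_gt0 [[j p]|]; first by exists (Alt j p).
by exists (Chain (Ordinal k_gt0) ord0); rewrite /= unlift_none.
Qed.

Lemma colour_surj c : exists v : node, colour v = c.
Proof. by case: c => j t; exists (Chain j t). Qed.

End ChainGadget.

Section ChainInstance.
Variables (R : rcfType) (k : nat).
Local Notation n := #|{: node k}|.

Definition chain_lower (c : 'I_#|{: 'I_k * 'I_k.+1}|) : nat := needed (enum_val c).

Definition chain_feasible (S : {set 'I_n}) : bool :=
  partition_indep (rank_map (@block k)) (fun=> 1%N) S &&
  fair (rank_map (@colour k)) chain_lower (fun=> 1%N) S.

Lemma chain_feasibleP (S : {set 'I_n}) :
  reflect (feasible_nodes (enum_rank @^-1: S)) (chain_feasible S).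
Proof.
apply: (iffP andP) => [[/partition_indep1P blockI /fair01P[colourI cover]] | ].
  split; [exact/rank_map_injP | exact/rank_map_injP |].
  exact: (rank_map_coverP _ _ S).1 cover.
case=> blockI colourI cover.
split; first exact/partition_indep1P/rank_map_injP.
apply/(fair01P _ (fun c => needed (enum_val c))); split; first exact/rank_map_injP.
exact: (rank_map_coverP _ _ S).2 cover.
Qed.

Definition chain_value (S : {set 'I_n}) : R :=
  coverage R (fun j : 'I_k => enum_rank @: down j) S.

Definition chain_point (e : 'I_n) : R :=
  k%:R^-1 * \sum_(j < k) (e \in enum_rank @: full_chain j)%:R.

Lemma chain_value_le1 S : chain_feasible S -> chain_value S <= 1.
Proof.
move=> /chain_feasibleP feasS; apply: coverage_le1 => i j.
by rewrite !setI_imset_eq0; apply: feasible_down_uniq.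
Qed.

Lemma chain_feasible_full j : chain_feasible (enum_rank @: full_chain j).
Proof. by apply/chain_feasibleP; rewrite enum_rank_imsetK; apply: feasible_full_chain. Qed.

Lemma sqrt_card_node_le : Num.sqrt (n%:R : R) <= 2 * k%:R.
Proof.
have n_le : (n <= (2 * k) ^ 2)%N by rewrite card_node expnMn; nia.
rewrite -[2 * k%:R]ger0_norm ?mulr_ge0 ?ler0n // -sqrtr_sqr ler_sqrt ?sqr_ge0 //.
by rewrite -natrM -natrX ler_nat.
Qed.

Hypothesis k_gt0 : (0 < k)%N.

Lemma chain_value_full j : chain_value (enum_rank @: full_chain j) = 1.
Proof.
apply/eqP; rewrite eq_le chain_value_le1 ?chain_feasible_full //=.
apply: (coverage_ge1 R (j := j)); rewrite setI_imset_eq0 enum_rank_imsetK.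
apply/set0Pn; exists (Chain j (lift ord0 (Ordinal k_gt0))).
by rewrite in_setI inE eqxx imset_f.
Qed.

Lemma chain_point_in_hull : in_hull chain_feasible chain_point.
Proof.
have := in_hull_average R (A := fun j : 'I_k => enum_rank @: full_chain j).
by rewrite /chain_point card_ord; apply=> //; apply: chain_feasible_full.
Qed.

Lemma chain_point_down j e : e \in enum_rank @: down j -> chain_point e = k%:R^-1.
Proof.
case/imsetP=> _ /imsetP[p _ ->] ->; rewrite /chain_point (bigD1 j) //= big1 ?addr0.
  by rewrite mem_imset ?inE ?eqxx ?mulr1 //; apply: enum_rank_inj.
move=> i ne_ij; rewrite mem_imset ?inE 1?eq_sym ?(negPf ne_ij) //.
exact: enum_rank_inj.
Qed.

Lemma multilinear_chain_ge : k%:R / 2 <= multilinear chain_value chain_point.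
Proof.
rewrite multilinear_coverage.
have prod_down j :
    \prod_(e in enum_rank @: down j) (1 - chain_point e) = (1 - k%:R^-1) ^+ k.
  rewrite (eq_bigr (fun=> 1 - k%:R^-1)) => [|e /chain_point_down -> //].
  by rewrite prodr_const card_imset ?card_down //; apply: enum_rank_inj.
under eq_bigr do rewrite prod_down.
have := one_subV_expr_le_half R k_gt0; set q := (1 - k%:R^-1) ^+ k => q_le.
rewrite sumr_const card_ord -[(1 - q) *+ k]mulr_natl.
have : 0 <= (k%:R : R) := ler0n _ _.
nra.
Qed.

End ChainInstance.

Theorem theorem3p2 (R : rcfType) :
  exists c : R, 0 < c /\
  forall N : nat, exists n : nat, (N <= n)%N /\
  exists (m : nat) (g : 'I_n -> 'I_m) (k : 'I_m -> nat)
         (C : nat) (col : 'I_n -> 'I_C) (l u : 'I_C -> nat)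
         (f : {set 'I_n} -> R) (x : 'I_n -> R),
    (forall i : 'I_m, exists e, g e = i) /\
    (forall c0 : 'I_C, exists e, col e = c0) /\
    (forall c0 : 'I_C, (l c0 <= u c0)%N) /\
    nonneg_fun f /\ submodular f /\ monotone f /\
    max_over_is (fun S => partition_indep g k S && fair col l u S) f 1 /\
    in_hull (fun S => partition_indep g k S && fair col l u S) x /\
    c * Num.sqrt n%:R <= multilinear f x.
Proof.
exists 4^-1; split=> [|N]; first by rewrite invr_gt0 ltr0n.
pose k := N.+1; have k_gt0 : (0 < k)%N by [].
exists #|{: node k}|; split; first by rewrite card_node; nia.
exists _, (rank_map (@block k)), (fun=> 1%N), _, (rank_map (@colour k)),
  (@chain_lower k), (fun=> 1%N), (@chain_value R k), (@chain_point R k).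
do ![split].
- exact/rank_map_surj/block_surj.
- exact/rank_map_surj/colour_surj.
- by move=> c; apply: leq_b1.
- exact: coverage_ge0.
- exact: coverage_submodular.
- exact: coverage_monotone.
- exists (enum_rank @: full_chain (Ordinal k_gt0)).
    exact: chain_feasible_full.
  exact: chain_value_full.
- exact: chain_value_le1.
- exact: chain_point_in_hull.
- apply: le_trans (multilinear_chain_ge R k_gt0).
  have := sqrt_card_node_le R k; have : 0 <= (k%:R : R) := ler0n _ _.
  lra.
Qed.
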